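(* A topological group $G$ is metrizable if and only if $G$ is a Fréchet–Urysohn $\aleph$-space.
   Context: A $k$-network in $X$ is a family $\mathcal N$ of subsets such that whenever $K\subset U$ with $K$ compact and $U$ open, there is a finite $\mathcal F\subset\mathcal N$ with $K\subset\bigcup\mathcal F\subset U$; an $\aleph$-space is a regular space with a $\sigma$-locally finite $k$-network. *)

From Stdlib Require Import Reals List.
Open Scope R_scope.

Definition set (X : Type) := X -> Prop.

Record topology (X : Type) := Topology {
  open : set X -> Prop;
  open_full : open (fun _ => True);
  open_inter : forall U V, open U -> open V -> open (fun x => U x /\ V x);
  open_union : forall F : set X -> Prop,
    (forall U, F U -> open U) -> open (fun x => exists U, F U /\ U x)
}.
Arguments open {X} t U.

Section Topo.
Context {X : Type} (T : topology X).

Definition closure (A : set X) : set X :=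
  fun x => forall U, open T U -> U x -> exists y, U y /\ A y.

Definition converges (s : nat -> X) (x : X) : Prop :=
  forall U, open T U -> U x -> exists N, forall n, (N <= n)%nat -> U (s n).

Definition frechet_urysohn : Prop :=
  forall (A : set X) (x : X), closure A x ->
    exists s : nat -> X, (forall n, A (s n)) /\ converges s x.

Definition compact (K : set X) : Prop :=
  forall F : set X -> Prop, (forall U, F U -> open T U) ->
    (forall x, K x -> exists U, F U /\ U x) ->
    exists l : list (set X), (forall U, In U l -> F U) /\
      (forall x, K x -> exists U, In U l /\ U x).

Definition k_network (N : set X -> Prop) : Prop :=
  forall K U : set X, compact K -> open T U -> (forall x, K x -> U x) ->
    exists l : list (set X), (forall A, In A l -> N A) /\
      (forall x, K x -> exists A, In A l /\ A x) /\
      (forall A, In A l -> forall x, A x -> U x).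

Definition locally_finite (N : set X -> Prop) : Prop :=
  forall x, exists V, open T V /\ V x /\
    exists l : list (set X),
      forall A, N A -> (exists y, V y /\ A y) -> In A l.

Definition sigma_locally_finite (N : set X -> Prop) : Prop :=
  exists Nn : nat -> (set X -> Prop),
    (forall A, N A <-> exists n, Nn n A) /\ (forall n, locally_finite (Nn n)).

Definition T1 : Prop :=
  forall x y : X, x <> y -> exists U, open T U /\ U y /\ ~ U x.

Definition regular : Prop :=
  T1 /\ forall (x : X) (U : set X), open T U -> U x ->
    exists V, open T V /\ V x /\ (forall y, closure V y -> U y).

Definition aleph_space : Prop :=
  regular /\ exists N : set X -> Prop, sigma_locally_finite N /\ k_network N.

Definition is_metric (d : X -> X -> R) : Prop :=
  (forall x y, 0 <= d x y) /\ (forall x y, d x y = 0 <-> x = y) /\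
  (forall x y, d x y = d y x) /\ (forall x y z, d x z <= d x y + d y z).

Definition metrizable : Prop :=
  exists d : X -> X -> R, is_metric d /\
    forall U : set X, open T U <->
      (forall x, U x -> exists eps, 0 < eps /\ forall y, d x y < eps -> U y).
End Topo.

(* Topological group: a group (mul, inv, e) whose multiplication is jointly
   continuous (continuity for the product topology, unfolded) and whose
   inversion is continuous. *)
Definition is_topological_group {G : Type} (T : topology G)
  (mul : G -> G -> G) (inv : G -> G) (e : G) : Prop :=
  (forall x y z, mul x (mul y z) = mul (mul x y) z) /\
  (forall x, mul e x = x) /\ (forall x, mul x e = x) /\
  (forall x, mul (inv x) x = e) /\ (forall x, mul x (inv x) = e) /\
  (forall x y W, open T W -> W (mul x y) ->
     exists U V, open T U /\ open T V /\ U x /\ V y /\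
       (forall u v, U u -> V v -> W (mul u v))) /\
  (forall W, open T W -> open T (fun x => W (inv x))).

(* Metric ⇒ Fréchet–Urysohn ℵ-space: balls of radius 1/(n+1) give convergent sequences, and
   Stone's σ-discrete base of a metric space is a σ-locally finite k-network, since any base
   refines compact subsets of open sets.

   Converse: let e be the identity of G.  Each locally finite layer of the k-network has a
   neighbourhood of e meeting only finitely many of its members; enumerate those countably
   many members as D_0, D_1, ....  For an open U ∋ e, a convergent sequence y → e lies
   frequently in one D_q ⊆ U (apply the k-network to the compact set {e} ∪ {y_j}).  If no
   finite union of D_q ⊆ U were a neighbourhood of e, Fréchet–Urysohn would give sequences
   x^M → e avoiding the M-th finite union, and the group structure (a diagonal argument with
   z_M → e, z_M ≠ e, applied to the products z_M x^M_k) combines them into one sequence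
   y_j → e whose terms x^(M_j)_(k_j) have M_j → ∞, a contradiction.  Hence e has a countable
   neighbourhood base, and a first countable T1 group is metrizable (Birkhoff–Kakutani):
   the distance is the infimum of the costs Σ 2^-k_i of chains whose steps lie in a
   decreasing sequence W_k of symmetric neighbourhoods with W_(k+1)^3 ⊆ W_k. *)

From Pilot Require Import Defs.
From Stdlib Require Import Reals List Lra Lia Classical ClassicalEpsilon
  FunctionalExtensionality PropExtensionality Cantor.
From mathcomp Require boolp wochoice.
Open Scope R_scope.

Definition well_ordered {X : Type} (lt : X -> X -> Prop) : Prop :=
  (forall a b, lt a b \/ lt b a) /\ (forall a b, lt a b -> lt b a -> a = b) /\
  (forall P : X -> Prop, (exists x, P x) -> exists m, P m /\ forall y, P y -> lt m y).

Lemma well_ordered_of_well_order (X : Type) (R : X -> X -> bool) :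
  wochoice.well_order R -> well_ordered (fun a b => R a b = true).
Proof.
  intros HR.
  assert (Hmin : forall P : X -> Prop, (exists x, P x) ->
    exists m, P m /\ (forall y, P y -> R m y = true) /\
      forall m', P m' -> (forall y, P y -> R m' y = true) -> m' = m).
  { intros P [x Px].
    destruct (HR (fun y => boolp.asbool (P y))) as [m [[Pm Hm] Hu]].
    - exists x. apply (ssrbool.introT (boolp.asboolP _)), Px.
    - exists m. split; [exact (ssrbool.elimT (boolp.asboolP _) Pm)|split].
      + intros y Py. apply Hm, (ssrbool.introT (boolp.asboolP _)), Py.
      + intros m' Pm' Hm'. symmetry. apply Hu. split.
        * apply (ssrbool.introT (boolp.asboolP _)), Pm'.
        * intros y Py. apply Hm', (ssrbool.elimT (boolp.asboolP _) Py). }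
  split; [|split].
  - intros a b. destruct (Hmin (fun y => y = a \/ y = b)) as [m [[-> | ->] [Hm _]]];
      [exists a; auto | left | right]; apply Hm; auto.
  - intros a b Rab Rba.
    assert (Hrefl : forall c, R c c = true).
    { intros c. destruct (Hmin (fun y => y = c)) as [m [-> [Hm _]]]; auto. exists c; auto. }
    destruct (Hmin (fun y => y = a \/ y = b)) as [m [_ [_ Hu]]]; [exists a; auto|].
    rewrite (Hu a), (Hu b); auto; intros y [-> | ->]; auto.
  - intros P HP. destruct (Hmin P HP) as [m [Pm [Hm _]]]. eauto.
Qed.

Lemma well_ordering (X : Type) : exists lt : X -> X -> Prop, well_ordered lt.
Proof.
  revert X. apply boolp.Peq. intros X.
  destruct (wochoice.well_ordering_principle X) as [R HR].
  eexists. exact (well_ordered_of_well_order _ R HR).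
Qed.

Lemma testbit_mask (P : nat -> Prop) (M : nat) :
  exists p, forall q, Nat.testbit p q = true <-> ((q < M)%nat /\ P q).
Proof.
  induction M as [|M [p Hp]].
  - exists 0%nat. intros q. rewrite Nat.bits_0. split; [discriminate | lia].
  - destruct (classic (P M)) as [HM|HM].
    + exists (Nat.setbit p M). intros q. rewrite Nat.setbit_iff, Hp. split.
      * intros [->|[h1 h2]]; split; auto; lia.
      * intros [h1 h2]. destruct (Nat.eq_dec M q); auto. right; split; auto; lia.
    + exists p. intros q. rewrite Hp. split.
      * intros [h1 h2]; split; auto; lia.
      * intros [h1 h2]. split; auto. destruct (Nat.eq_dec q M) as [->|]; [contradiction | lia].
Qed.

Definition radius (n : nat) : R := / (INR n + 1).

Lemma radius_pos (n : nat) : 0 < radius n.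
Proof. apply Rinv_0_lt_compat. pose proof (pos_INR n); lra. Qed.

Lemma radius_lt (eps : R) : 0 < eps -> exists n, radius n < eps.
Proof.
  intros He. destruct (archimed_cor1 eps He) as [N [H1 H2]].
  exists N. eapply Rle_lt_trans; [|exact H1].
  apply Rinv_le_contravar; [apply lt_0_INR; lia | lra].
Qed.

Lemma radius_le (m n : nat) : (m <= n)%nat -> radius n <= radius m.
Proof.
  intros H. apply le_INR in H. apply Rinv_le_contravar; pose proof (pos_INR m); lra.
Qed.

Lemma half_pow_pos (k : nat) : 0 < (/2)^k.
Proof. apply pow_lt. lra. Qed.

Lemma half_pow_le_inv (j k : nat) : (/2)^k <= (/2)^j -> (j <= k)%nat.
Proof.
  intros H. destruct (Nat.le_gt_cases j k) as [h|h]; [exact h|exfalso].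
  assert ((/2)^(j - k) < 1) by (apply pow_lt_1_compat; [split; lra | lia]).
  replace j with (k + (j - k))%nat in H by lia. rewrite pow_add in H.
  pose proof (half_pow_pos k). nra.
Qed.

Section Topology.
Context {X : Type} (T : topology X).

Lemma open_ext (U V : set X) : (forall x, U x <-> V x) -> open T U -> open T V.
Proof.
  intros HUV HU. replace V with U; [exact HU|].
  apply functional_extensionality; intros x; apply propositional_extensionality, HUV.
Qed.

Lemma open_of_local (U : set X) :
  (forall x, U x -> exists O, open T O /\ O x /\ forall y, O y -> U y) -> open T U.
Proof.
  intros H.
  apply (open_ext (fun x => exists O, (open T O /\ forall y, O y -> U y) /\ O x)).
  - intros x; split.
    + intros [O [[_ HOU] Ox]]; auto.
    + intros Ux; destruct (H x Ux) as [O [HO [Ox HOU]]]; exists O; auto.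
  - apply open_union. intros O [HO _]; exact HO.
Qed.

Lemma open_bounded_inter (F : nat -> set X) : (forall M, open T (F M)) ->
  forall M0, open T (fun x => forall M, (M <= M0)%nat -> F M x).
Proof.
  intros HF M0. induction M0 as [|M0 IH].
  - apply (open_ext (F O)); [|apply HF]. intros x; split.
    + intros H M HM. replace M with O by lia. exact H.
    + intros H; apply H; lia.
  - apply (open_ext (fun x => (forall M, (M <= M0)%nat -> F M x) /\ F (S M0) x)).
    + intros x; split.
      * intros [H1 H2] M HM. destruct (Nat.eq_dec M (S M0)) as [->|h]; auto. apply H1; lia.
      * intros H; split; auto.
    + apply open_inter; auto.
Qed.

Definition interior (S : set X) : set X :=
  fun x => exists W, open T W /\ W x /\ forall y, W y -> S y.

Lemma interior_open (S : set X) : open T (interior S).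
Proof.
  apply open_of_local. intros x [W [HW [Wx HWS]]]. exists W. split; auto. split; auto.
  intros y Wy. exists W; auto.
Qed.

Lemma closure_complement_of_not_interior (S : set X) (x : X) :
  ~ interior S x -> closure T (fun y => ~ S y) x.
Proof.
  intros Hx W HW Wx. apply NNPP. intros Hno. apply Hx.
  exists W. split; [exact HW | split; [exact Wx|]]. intros y Wy. apply NNPP. intros Sy. apply Hno. exists y; auto.
Qed.

Definition countable_base_at (x : X) : Prop :=
  exists V : nat -> set X, (forall k, open T (V k) /\ V k x) /\
    forall U, open T U -> U x -> exists k, forall y, V k y -> U y.

Lemma converges_const (x : X) : converges T (fun _ => x) x.
Proof. intros U _ Ux. exists O; auto. Qed.

Lemma converges_ext (s t : nat -> X) (x : X) :
  (forall n, s n = t n) -> converges T s x -> converges T t x.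
Proof.
  intros Hst Hs U HU Ux. destruct (Hs U HU Ux) as [N HN]. exists N.
  intros n Hn. rewrite <- Hst. auto.
Qed.

Lemma converges_comp_unbounded (s : nat -> X) (x : X) (f : nat -> nat) :
  converges T s x -> (forall M0, exists J, forall j, (J <= j)%nat -> (M0 < f j)%nat) ->
  converges T (fun j => s (f j)) x.
Proof.
  intros Hs Hf U HU Ux. destruct (Hs U HU Ux) as [N HN]. destruct (Hf N) as [J HJ].
  exists J. intros j hj. apply HN. specialize (HJ j hj). lia.
Qed.

Lemma converges_isolated (s : nat -> X) (x : X) :
  interior (fun y => y = x) x -> converges T s x -> exists k, s k = x.
Proof.
  intros [W [HW [Wx HWx]]] Hs. destruct (Hs W HW Wx) as [K HK]. exists K. apply HWx, HK; lia.
Qed.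

Lemma hausdorff_of_regular : regular T -> forall x y : X, x <> y ->
  exists P Q, open T P /\ open T Q /\ P x /\ Q y /\ forall z, P z -> Q z -> False.
Proof.
  intros [HT1 Hreg] x y Hxy. destruct (HT1 x y Hxy) as [U [HU [Uy nUx]]].
  destruct (Hreg y U HU Uy) as [V [HV [Vy HVU]]].
  assert (Hx : ~ closure T V x) by (intro Hc; apply nUx, HVU, Hc).
  apply not_all_ex_not in Hx. destruct Hx as [O HO].
  apply imply_to_and in HO. destruct HO as [HO HO'].
  apply imply_to_and in HO'. destruct HO' as [Ox HOV].
  exists O, V. repeat split; auto. intros z Oz Vz. apply HOV. exists z; auto.
Qed.

Lemma open_avoiding_initial_segment (HT1 : T1 T) (s : nat -> X) (x : X) (K : nat) :
  exists O, open T O /\ O x /\ forall k, (k < K)%nat -> s k <> x -> ~ O (s k).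
Proof.
  induction K as [|K [O [HO [Ox HOs]]]].
  - exists (fun _ => True). split; [apply open_full | split; [exact I | intros k h; lia]].
  - destruct (classic (s K = x)) as [Hx|Hx].
    + exists O. split; [exact HO | split; [exact Ox|]]. intros k hk hne.
      destruct (Nat.eq_dec k K) as [->|hk']; [contradiction | apply HOs; auto; lia].
    + destruct (HT1 (s K) x Hx) as [P [HP [Px nP]]].
      exists (fun y => O y /\ P y). split; [apply open_inter; auto | split; [auto|]].
      intros k hk hne [Ok Pk]. destruct (Nat.eq_dec k K) as [->|hk']; [auto|].
      apply (HOs k ltac:(lia) hne Ok).
Qed.

Lemma open_avoiding_sequence (Hreg : regular T) (s : nat -> X) (z x : X) :
  converges T s z -> z <> x -> exists O, open T O /\ O x /\ forall k, s k <> x -> ~ O (s k).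
Proof.
  intros Hs Hzx.
  destruct (hausdorff_of_regular Hreg z x Hzx) as [P [Q [HP [HQ [Pz [Qx HPQ]]]]]].
  destruct (Hs P HP Pz) as [K HK].
  destruct (open_avoiding_initial_segment (proj1 Hreg) s x K) as [O [HO [Ox HOs]]].
  exists (fun y => Q y /\ O y). split; [apply open_inter; auto | split; [auto|]].
  intros k hne [Qk Ok]. destruct (Nat.le_gt_cases K k) as [h|h].
  - exact (HPQ _ (HK k h) Qk).
  - exact (HOs k h hne Ok).
Qed.

Lemma diagonal_rows_escape (Hreg : regular T) (s : nat -> nat -> X) (z : nat -> X) (x : X)
  (mk : nat -> nat * nat) :
  (forall M, converges T (s M) (z M)) -> (forall M, z M <> x) ->
  (forall j, s (fst (mk j)) (snd (mk j)) <> x) ->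
  converges T (fun j => s (fst (mk j)) (snd (mk j))) x ->
  forall M0, exists J, forall j, (J <= j)%nat -> (M0 < fst (mk j))%nat.
Proof.
  intros Hs Hz Hne Hconv M0.
  destruct (choice (fun M O => open T O /\ O x /\ forall k, s M k <> x -> ~ O (s M k)))
    as [O HO].
  { intros M. exact (open_avoiding_sequence Hreg (s M) (z M) x (Hs M) (Hz M)). }
  destruct (Hconv _ (open_bounded_inter O (fun M => proj1 (HO M)) M0)) as [J HJ].
  { intros M _. apply HO. }
  exists J. intros j hj. destruct (Nat.le_gt_cases (fst (mk j)) M0) as [h|h]; [exfalso|exact h].
  exact (proj2 (proj2 (HO (fst (mk j)))) _ (Hne j) (HJ j hj _ h)).
Qed.

Lemma compact_sequence_tail (s : nat -> X) (x : X) (J : nat) : converges T s x ->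
  Defs.compact T (fun y => y = x \/ exists j, (J <= j)%nat /\ y = s j).
Proof.
  intros Hs F HF Hcov.
  destruct (Hcov x (or_introl eq_refl)) as [U0 [FU0 U0x]].
  destruct (Hs U0 (HF U0 FU0) U0x) as [N0 HN0].
  assert (Hinit : forall n, exists l : list (set X), (forall U, In U l -> F U) /\
     forall j, (J <= j)%nat -> (j < n)%nat -> exists U, In U l /\ U (s j)).
  { induction n as [|n [l [Hl1 Hl2]]].
    - exists nil. split; [intros U [] | intros j _ h; lia].
    - destruct (Nat.le_gt_cases J n) as [hJ|hJ].
      + destruct (Hcov (s n)) as [U [FU Us]]; [right; eauto|].
        exists (U :: l). split.
        * intros V [<-|hV]; auto.
        * intros j h1 h2. destruct (Nat.eq_dec j n) as [->|hj].
          -- exists U; split; [left|]; auto.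
          -- destruct (Hl2 j h1 ltac:(lia)) as [V [hV1 hV2]]. exists V; split; [right|]; auto.
      + exists l. split; auto. intros j h1 h2. apply Hl2; lia. }
  destruct (Hinit N0) as [l [Hl1 Hl2]]. exists (U0 :: l). split.
  - intros V [<-|hV]; auto.
  - intros y [->|[j [hj ->]]].
    + exists U0; split; [left|]; auto.
    + destruct (Nat.le_gt_cases N0 j) as [h|h].
      * exists U0. split; [left; auto | apply HN0; auto].
      * destruct (Hl2 j hj h) as [V [hV1 hV2]]. exists V; split; [right|]; auto.
Qed.

Lemma finite_cover_frequently (L : list (set X)) (s : nat -> X) (J : nat) :
  (forall j, (J <= j)%nat -> exists A, In A L /\ A (s j)) ->
  exists A, In A L /\ forall J', exists j, (J' <= j)%nat /\ A (s j).
Proof.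
  revert J. induction L as [|A L IH]; intros J H.
  - destruct (H J (le_n J)) as [A [[] _]].
  - destruct (classic (forall J', exists j, (J' <= j)%nat /\ A (s j))) as [h|h].
    + exists A. split; [left|]; auto.
    + apply not_all_ex_not in h. destruct h as [J0 h].
      destruct (IH (max J J0)) as [B [HB1 HB2]].
      * intros j hj. destruct (H j ltac:(lia)) as [B [[<-|HB] HBs]].
        -- exfalso. apply h. exists j. split; auto; lia.
        -- exists B; auto.
      * exists B. split; [right|]; auto.
Qed.

Lemma open_base_k_network (N : set X -> Prop) : (forall A, N A -> open T A) ->
  (forall U x, open T U -> U x -> exists A, N A /\ A x /\ forall y, A y -> U y) ->
  k_network T N.
Proof.
  intros HNo HNb K U HK HU HKU.
  destruct (HK (fun A => N A /\ forall y, A y -> U y)) as [l [Hl1 Hl2]].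
  - intros A [NA _]; auto.
  - intros x Kx. destruct (HNb U x HU (HKU x Kx)) as [A [NA [Ax HAU]]]. eauto.
  - exists l. split; [|split]; auto; intros A HA; apply (Hl1 A HA).
Qed.

End Topology.

Section Metric.
Context {X : Type} (T : topology X) (d : X -> X -> R) (Hd : is_metric d)
  (Hop : forall U : set X, open T U <->
      (forall x, U x -> exists eps, 0 < eps /\ forall y, d x y < eps -> U y)).

Lemma d_pos x y : 0 <= d x y. Proof. apply Hd. Qed.
Lemma d_refl x : d x x = 0. Proof. apply Hd; reflexivity. Qed.
Lemma d_sym x y : d x y = d y x. Proof. apply Hd. Qed.
Lemma d_triangle x y z : d x z <= d x y + d y z. Proof. apply Hd. Qed.
Lemma d_eq0 x y : d x y = 0 -> x = y. Proof. apply Hd. Qed.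

Lemma ball_open (x : X) (r : R) : open T (fun y => d x y < r).
Proof.
  apply Hop. intros y Hy. exists (r - d x y). split; [lra|].
  intros z Hz. pose proof (d_triangle x y z). lra.
Qed.

Lemma metric_frechet_urysohn : frechet_urysohn T.
Proof.
  intros A x Hx.
  assert (Hs : forall n, exists y, A y /\ d x y < radius n).
  { intros n. destruct (Hx _ (ball_open x (radius n))) as [y [Hy1 Hy2]];
      [rewrite d_refl; apply radius_pos | eauto]. }
  destruct (choice _ Hs) as [s Hs']. exists s. split; [intros n; apply Hs'|].
  intros U HU Ux. destruct (proj1 (Hop U) HU x Ux) as [eps [He HB]].
  destruct (radius_lt eps He) as [N HN]. exists N. intros n Hn. apply HB.
  pose proof (radius_le _ _ Hn). destruct (Hs' n). lra.
Qed.

Lemma metric_regular : regular T.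
Proof.
  split.
  - intros x y Hxy. exists (fun z => d y z < d x y). split; [apply ball_open|split].
    + rewrite d_refl. destruct (Rle_lt_or_eq _ _ (d_pos x y)) as [h|h]; [exact h|].
      exfalso; apply Hxy, d_eq0; auto.
    + rewrite d_sym; lra.
  - intros x U HU Ux. destruct (proj1 (Hop U) HU x Ux) as [eps [He HB]].
    exists (fun y => d x y < eps / 2). split; [apply ball_open | split; [rewrite d_refl; lra|]].
    intros y Hy. destruct (Hy _ (ball_open y (eps / 2))) as [z [Hz1 Hz2]]; [rewrite d_refl; lra|].
    apply HB. pose proof (d_triangle x z y). rewrite (d_sym z y) in *. lra.
Qed.

Section StoneBase.
Variable lt : X -> X -> Prop.
Hypothesis Hlt : well_ordered lt.

Definition ball_least (m : nat) (y : X) : X :=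
  epsilon (inhabits y) (fun a => d a y < radius m /\ forall b, d b y < radius m -> lt a b).

Lemma ball_least_spec (m : nat) (y : X) :
  d (ball_least m y) y < radius m /\ forall b, d b y < radius m -> lt (ball_least m y) b.
Proof.
  unfold ball_least. apply epsilon_spec, Hlt. exists y. rewrite d_refl. apply radius_pos.
Qed.

(* Stone's construction: a cell is indexed by the least point of the balls it is built
   from, which is what makes distinct cells of one level (m, n) lie 1/(n+1) apart. *)
Definition stone_cell (m n : nat) (a : X) : set X := fun z =>
  exists y, d y z < radius n /\ ball_least m y = a /\
    forall w, d y w < 3 * radius n -> d a w < radius m.

Lemma stone_cell_open (m n : nat) (a : X) : open T (stone_cell m n a).
Proof.
  apply Hop. intros z [y [Hyz [Hya Hy]]]. exists (radius n - d y z). split; [lra|].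
  intros w Hw. exists y. split; auto. pose proof (d_triangle y z w). lra.
Qed.

Lemma stone_cell_sub_ball (m n : nat) (a z : X) : stone_cell m n a z -> d a z < radius m.
Proof.
  intros [y [Hyz [_ Hy]]]. apply Hy. pose proof (radius_pos n). lra.
Qed.

Lemma stone_cell_cover (m : nat) (x : X) : exists n, stone_cell m n (ball_least m x) x.
Proof.
  destruct (ball_least_spec m x) as [Hx _].
  destruct (radius_lt ((radius m - d (ball_least m x) x) / 3)) as [n Hn]; [lra|].
  exists n, x. split; [rewrite d_refl; apply radius_pos | split; [reflexivity|]].
  intros w Hw. pose proof (d_triangle (ball_least m x) x w). lra.
Qed.

Lemma stone_cells_apart (m n : nat) (a b z1 z2 : X) :
  a <> b -> stone_cell m n a z1 -> stone_cell m n b z2 -> radius n <= d z1 z2.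
Proof.
  assert (Hord : forall a b z1 z2, lt a b -> a <> b ->
            stone_cell m n a z1 -> stone_cell m n b z2 -> radius n <= d z1 z2).
  { intros a' b' z1' z2' Hab Hne [y1 [H11 [H12 H13]]] [y2 [H21 [H22 H23]]].
    assert (Ha : radius m <= d a' y2).
    { destruct (Rlt_or_le (d a' y2) (radius m)) as [h|h]; [exfalso|exact h].
      apply Hne, (proj1 (proj2 Hlt)); [exact Hab|]. subst b'. apply (ball_least_spec m y2), h. }
    assert (Hy : 3 * radius n <= d y1 y2).
    { destruct (Rlt_or_le (d y1 y2) (3 * radius n)) as [h|h]; [|exact h].
      apply H13 in h. lra. }
    pose proof (d_triangle y1 z1' y2). pose proof (d_triangle z1' z2' y2).
    rewrite (d_sym z2' y2) in *. lra. }
  intros Hne H1 H2. destruct (proj1 Hlt a b) as [h|h].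
  - eapply Hord; eauto.
  - rewrite d_sym. eapply Hord; eauto.
Qed.

Definition stone_layer (k : nat) : set X -> Prop :=
  fun A => exists a, A = stone_cell (fst (of_nat k)) (snd (of_nat k)) a.

Lemma stone_layer_locally_finite (k : nat) : locally_finite T (stone_layer k).
Proof.
  set (m := fst (of_nat k)). set (n := snd (of_nat k)).
  intros x. exists (fun y => d x y < radius n / 2).
  split; [apply ball_open | split; [rewrite d_refl; pose proof (radius_pos n); lra|]].
  destruct (classic (exists a y, d x y < radius n / 2 /\ stone_cell m n a y))
    as [[a [y [Hxy Hy]]]|Hno].
  - exists (stone_cell m n a :: nil). intros A [b ->] [z [Hxz Hz]]. left.
    destruct (classic (a = b)) as [->|Hne]; [reflexivity|exfalso].
    pose proof (stone_cells_apart m n a b y z Hne Hy Hz).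
    pose proof (d_triangle y x z). rewrite (d_sym y x) in *. lra.
  - exists nil. intros A [b ->] [z [Hxz Hz]]. apply Hno. exists b, z; auto.
Qed.

Lemma metric_sigma_locally_finite_base : exists N : set X -> Prop,
  sigma_locally_finite T N /\ (forall A, N A -> open T A) /\
  forall U x, open T U -> U x -> exists A, N A /\ A x /\ forall y, A y -> U y.
Proof.
  exists (fun A => exists k, stone_layer k A). split; [|split].
  - exists stone_layer. split; [tauto | apply stone_layer_locally_finite].
  - intros A [k [a ->]]. apply stone_cell_open.
  - intros U x HU Ux. destruct (proj1 (Hop U) HU x Ux) as [eps [He HB]].
    destruct (radius_lt (eps / 2)) as [m Hm]; [lra|].
    destruct (stone_cell_cover m x) as [n Hn].
    exists (stone_cell m n (ball_least m x)). split; [|split; [exact Hn|]].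
    + exists (to_nat (m, n)), (ball_least m x). rewrite cancel_of_to. reflexivity.
    + intros z Hz. apply HB.
      pose proof (stone_cell_sub_ball _ _ _ _ Hz). pose proof (stone_cell_sub_ball _ _ _ _ Hn).
      pose proof (d_triangle x (ball_least m x) z). rewrite (d_sym x (ball_least m x)) in *.
      lra.
Qed.

End StoneBase.

Lemma metric_aleph : aleph_space T.
Proof.
  destruct (well_ordering X) as [lt Hlt].
  destruct (metric_sigma_locally_finite_base lt Hlt) as [N [HN [HNo HNb]]].
  split; [exact metric_regular|]. exists N. split; [exact HN|]. apply open_base_k_network; auto.
Qed.

End Metric.

Section TopologicalGroup.
Context {G : Type} (T : topology G) (mul : G -> G -> G) (inv : G -> G) (e : G)
  (HG : is_topological_group T mul inv e).

Lemma mulA x y z : mul x (mul y z) = mul (mul x y) z. Proof. apply HG. Qed.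
Lemma mul1g x : mul e x = x. Proof. apply HG. Qed.
Lemma mulg1 x : mul x e = x. Proof. apply HG. Qed.
Lemma mulVg x : mul (inv x) x = e. Proof. apply HG. Qed.
Lemma mulgV x : mul x (inv x) = e. Proof. apply HG. Qed.

Lemma mul_continuous x y W : open T W -> W (mul x y) ->
  exists U V, open T U /\ open T V /\ U x /\ V y /\ forall u v, U u -> V v -> W (mul u v).
Proof. apply HG. Qed.

Lemma inv_open W : open T W -> open T (fun x => W (inv x)).
Proof. apply HG. Qed.

Lemma mulKg x y : mul (inv x) (mul x y) = y.
Proof. rewrite mulA, mulVg, mul1g; reflexivity. Qed.

Lemma mulKVg x y : mul x (mul (inv x) y) = y.
Proof. rewrite mulA, mulgV, mul1g; reflexivity. Qed.

Lemma inv_unique a b : mul a b = e -> b = inv a.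
Proof. intros H. rewrite <- (mulKg a b), H, mulg1. reflexivity. Qed.

Lemma inv1 : inv e = e.
Proof. symmetry. apply inv_unique, mul1g. Qed.

Lemma invgK x : inv (inv x) = x.
Proof. symmetry. apply inv_unique, mulVg. Qed.

Lemma invM x y : inv (mul x y) = mul (inv y) (inv x).
Proof. symmetry. apply inv_unique. rewrite <- mulA, (mulA y), mulgV, mul1g. apply mulgV. Qed.

Lemma mul_telescope3 x u z y :
  mul (mul (inv x) u) (mul (mul (inv u) z) (mul (inv z) y)) = mul (inv x) y.
Proof. rewrite <- (mulA (inv u) z), mulKVg, <- (mulA (inv x) u), mulKVg. reflexivity. Qed.

Lemma open_lmul a W : open T W -> open T (fun y => W (mul a y)).
Proof.
  intros HW. apply open_of_local. intros y Hy.
  destruct (mul_continuous a y W HW Hy) as [P [Q [HP [HQ [Pa [Qy HPQ]]]]]].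
  exists Q. auto.
Qed.

Lemma converges_mul s t a b : converges T s a -> converges T t b ->
  converges T (fun n => mul (s n) (t n)) (mul a b).
Proof.
  intros Hs Ht W HW Wab.
  destruct (mul_continuous a b W HW Wab) as [P [Q [HP [HQ [Pa [Qb HPQ]]]]]].
  destruct (Hs P HP Pa) as [N1 H1]. destruct (Ht Q HQ Qb) as [N2 H2].
  exists (max N1 N2). intros n Hn. apply HPQ; [apply H1 | apply H2]; lia.
Qed.

Lemma converges_inv s a : converges T s a -> converges T (fun n => inv (s n)) (inv a).
Proof.
  intros Hs W HW Wa. destruct (Hs _ (inv_open W HW) Wa) as [N HN]. exists N; auto.
Qed.

Section FrechetUrysohnGroup.
Hypothesis HFU : frechet_urysohn T.
Hypothesis Hreg : regular T.

Lemma closure_translated_rows (z : nat -> G) (xs : nat -> nat -> G) :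
  converges T z e -> (forall M, z M <> e) -> (forall M, converges T (xs M) e) ->
  closure T (fun a => exists M k, a = mul (z M) (xs M k) /\ a <> e) e.
Proof.
  intros Hz Hze Hxs W HW We.
  rewrite <- (mul1g e) in We.
  destruct (mul_continuous e e W HW We) as [P [Q [HP [HQ [Pe [Qe HPQ]]]]]].
  destruct (Hz P HP Pe) as [M HM].
  assert (Hinv : inv (z M) <> e).
  { intros h. apply (Hze M). rewrite <- (invgK (z M)), h. apply inv1. }
  destruct (proj1 Hreg (inv (z M)) e Hinv) as [R0 [HR0 [R0e nR0]]].
  destruct (Hxs M (fun x => Q x /\ R0 x) (open_inter _ _ _ _ HQ HR0) (conj Qe R0e)) as [K HK].
  destruct (HK K (le_n K)) as [HQK HRK].
  exists (mul (z M) (xs M K)). split.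
  - apply HPQ; [apply HM; lia | exact HQK].
  - exists M, K. split; [reflexivity|]. intros h. apply nR0.
    rewrite <- (inv_unique _ _ h). exact HRK.
Qed.

(* The group structure enters here: translating the rows by z_M → e, z_M ≠ e, makes them
   converge to distinct points, which forces a convergent diagonal to leave every row. *)
Lemma frechet_urysohn_group_diagonal (xs : nat -> nat -> G) :
  (forall M, converges T (xs M) e) ->
  exists mk : nat -> nat * nat,
    (forall M0, exists J, forall j, (J <= j)%nat -> (M0 < fst (mk j))%nat) /\
    converges T (fun j => xs (fst (mk j)) (snd (mk j))) e.
Proof.
  intros Hxs. destruct (classic (interior T (fun y => y = e) e)) as [Hiso|Hiso].
  - destruct (choice (fun M k => xs M k = e)) as [kf Hkf].
    { intros M. exact (converges_isolated T (xs M) e Hiso (Hxs M)). }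
    exists (fun j => (j, kf j)). split.
    + intros M0. exists (S M0). intros j hj. simpl. lia.
    + apply (converges_ext T (fun _ => e)); [intros j; simpl; auto | apply converges_const].
  - destruct (HFU _ _ (closure_complement_of_not_interior T _ _ Hiso)) as [z [Hze Hz]].
    destruct (HFU _ _ (closure_translated_rows z xs Hz Hze Hxs)) as [a [Ha Haconv]].
    destruct (choice (fun j (p : nat * nat) =>
                a j = mul (z (fst p)) (xs (fst p) (snd p)) /\ a j <> e)) as [mk Hmk].
    { intros j. destruct (Ha j) as [M [k Hk]]. exists (M, k). exact Hk. }
    assert (Hrows : forall M, converges T (fun k => mul (z M) (xs M k)) (z M)).
    { intros M. assert (H := converges_mul _ _ _ _ (converges_const T (z M)) (Hxs M)).
      rewrite mulg1 in H. exact H. }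
    assert (Hesc : forall M0, exists J, forall j, (J <= j)%nat -> (M0 < fst (mk j))%nat).
    { apply (diagonal_rows_escape T Hreg _ z e mk Hrows Hze).
      - intros j. rewrite <- (proj1 (Hmk j)). apply Hmk.
      - apply (converges_ext T a); [apply Hmk | exact Haconv]. }
    exists mk. split; [exact Hesc|].
    assert (Hlim := converges_mul _ _ _ _
                 (converges_inv _ _ (converges_comp_unbounded T z e _ Hz Hesc)) Haconv).
    rewrite inv1, mul1g in Hlim.
    apply (converges_ext T (fun j => mul (inv (z (fst (mk j)))) (a j))); [|exact Hlim].
    intros j. rewrite (proj1 (Hmk j)). apply mulKg.
Qed.

Section KNetwork.
Variables (N : set G -> Prop) (Nn : nat -> set G -> Prop).
Hypothesis HNn : forall A, N A <-> exists n, Nn n A.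
Hypothesis Hlf : forall n, locally_finite T (Nn n).
Hypothesis Hkn : k_network T N.

Definition layer_window (n : nat) : set G * list (set G) :=
  epsilon (inhabits ((fun _ => True), nil)) (fun p => open T (fst p) /\ fst p e /\
    forall A, Nn n A -> (exists y, fst p y /\ A y) -> In A (snd p)).

Lemma layer_window_spec (n : nat) :
  open T (fst (layer_window n)) /\ fst (layer_window n) e /\
  forall A, Nn n A -> (exists y, fst (layer_window n) y /\ A y) -> In A (snd (layer_window n)).
Proof.
  unfold layer_window. apply epsilon_spec.
  destruct (Hlf n e) as [V [HV [Ve [l Hl]]]]. exists (V, l). auto.
Qed.

(* Enumeration, through Cantor pairing, of the network members that meet the window of
   their layer at e; unused indices give the empty set. *)
Definition near_member (q : nat) : set G :=
  nth (snd (of_nat q)) (snd (layer_window (fst (of_nat q)))) (fun _ => False).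

Lemma near_member_frequently (y : nat -> G) (U : set G) :
  converges T y e -> open T U -> U e ->
  exists q, (forall x, near_member q x -> U x) /\
    forall J, exists j, (J <= j)%nat /\ near_member q (y j).
Proof.
  intros Hy HU Ue. destruct (Hy U HU Ue) as [J HJ].
  destruct (Hkn (fun z => z = e \/ exists j, (J <= j)%nat /\ z = y j) U)
    as [L [HLN [HLcov HLU]]].
  - apply compact_sequence_tail, Hy.
  - exact HU.
  - intros x [->|[j [hj ->]]]; auto.
  - destruct (finite_cover_frequently L y J) as [A [HA HAy]].
    { intros j hj. apply HLcov. right; eauto. }
    destruct (proj1 (HNn A) (HLN A HA)) as [n Hn].
    destruct (layer_window_spec n) as [HV [Ve HVl]].
    destruct (Hy _ HV Ve) as [J1 HJ1].
    assert (Hin : In A (snd (layer_window n))).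
    { apply HVl; [exact Hn|]. destruct (HAy J1) as [j [hj Aj]]. exists (y j); auto. }
    destruct (In_nth _ _ (fun _ => False) Hin) as [i [_ Hi]].
    exists (to_nat (n, i)).
    replace (near_member (to_nat (n, i))) with A
      by (unfold near_member; rewrite cancel_of_to; symmetry; exact Hi).
    split; [exact (HLU A HA) | exact HAy].
Qed.

Definition small_union (M : nat) (U : set G) : set G :=
  fun x => exists q, (q < M)%nat /\ (forall z, near_member q z -> U z) /\ near_member q x.

Lemma small_union_nbhd (U : set G) : open T U -> U e -> exists M, interior T (small_union M U) e.
Proof.
  intros HU Ue. apply NNPP. intros Hno.
  destruct (choice (fun M (s : nat -> G) =>
              (forall k, ~ small_union M U (s k)) /\ converges T s e)) as [xs Hxs].
  { intros M. apply (HFU (fun x => ~ small_union M U x)), closure_complement_of_not_interior.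
    intros h. apply Hno; eauto. }
  destruct (frechet_urysohn_group_diagonal xs (fun M => proj2 (Hxs M))) as [mk [Hesc Hconv]].
  destruct (near_member_frequently _ U Hconv HU Ue) as [q [HqU Hfreq]].
  destruct (Hesc q) as [J HJ]. destruct (Hfreq J) as [j [hj Hj]].
  apply (proj1 (Hxs (fst (mk j))) (snd (mk j))). exists q. auto.
Qed.

Definition mask_union (p : nat) : set G :=
  fun x => exists q, Nat.testbit p q = true /\ near_member q x.

Lemma countable_base_at_identity : countable_base_at T e.
Proof.
  (* The candidate neighbourhood for the mask p is made the whole space when e is not
     interior to the masked union, so that each one contains e. *)
  exists (fun p x => interior T (mask_union p) e -> interior T (mask_union p) x). split.
  - intros p. split; [|auto]. destruct (classic (interior T (mask_union p) e)).
    + apply (open_ext T (interior T (mask_union p))); [intros x; tauto | apply interior_open].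
    + apply (open_ext T (fun _ => True)); [intros x; tauto | apply open_full].
  - intros U HU Ue. destruct (small_union_nbhd U HU Ue) as [M [W [HW [We HWM]]]].
    destruct (testbit_mask (fun q => forall z, near_member q z -> U z) M) as [p Hp].
    exists p. intros x Hx.
    assert (He : interior T (mask_union p) e).
    { exists W. split; [exact HW | split; [exact We|]]. intros z Wz.
      destruct (HWM z Wz) as [q [h1 [h2 h3]]]. exists q. split; [apply Hp|]; auto. }
    destruct (Hx He) as [W' [_ [W'x HW'p]]].
    destruct (HW'p x W'x) as [q [hq Hqx]]. apply Hp in hq. apply (proj2 hq), Hqx.
Qed.

End KNetwork.
End FrechetUrysohnGroup.

Definition cube_root_of (U W : set G) : Prop :=
  open T W /\ W e /\ (forall x, W x -> W (inv x)) /\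
  (forall a b c, W a -> W b -> W c -> U (mul a (mul b c))).

Lemma exists_cube_root (U : set G) : open T U -> U e -> exists W, cube_root_of U W.
Proof.
  intros HU Ue. rewrite <- (mul1g e) in Ue.
  destruct (mul_continuous e e U HU Ue) as [P [Q [HP [HQ [Pe [Qe HPQ]]]]]].
  rewrite <- (mul1g e) in Qe.
  destruct (mul_continuous e e Q HQ Qe) as [P2 [Q2 [HP2 [HQ2 [P2e [Q2e HPQ2]]]]]].
  set (W0 := fun x => P x /\ P2 x /\ Q2 x).
  assert (HW0 : open T W0) by (repeat apply open_inter; auto).
  exists (fun x => W0 x /\ W0 (inv x)). split; [|split; [|split]].
  - apply open_inter; [exact HW0 | apply inv_open, HW0].
  - rewrite inv1. unfold W0; auto.
  - intros x [h1 h2]. rewrite invgK. auto.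
  - intros a b c [[Pa _] _] [[_ [P2b _]] _] [[_ [_ Q2c]] _]. apply HPQ; auto.
Qed.

Definition cube_root (U : set G) : set G :=
  epsilon (inhabits U) (fun W => open T U -> U e -> cube_root_of U W).

Lemma cube_root_spec (U : set G) : open T U -> U e -> cube_root_of U (cube_root U).
Proof.
  intros HU Ue.
  assert (Hex : exists W, open T U -> U e -> cube_root_of U W).
  { destruct (exists_cube_root U HU Ue) as [W HW]. eauto. }
  exact (epsilon_spec (inhabits U) _ Hex HU Ue).
Qed.

Section BirkhoffKakutani.
Hypothesis HT1 : T1 T.
Variable V : nat -> set G.
Hypothesis HV : forall k, open T (V k) /\ V k e.
Hypothesis HVbase : forall U, open T U -> U e -> exists k, forall x, V k x -> U x.

Fixpoint Wn (k : nat) : set G :=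
  match k with
  | O => fun _ => True
  | S k => cube_root (fun x => Wn k x /\ V k x)
  end.

Lemma Wn_open (k : nat) : open T (Wn k) /\ Wn k e.
Proof.
  induction k as [|k [HW We]]; simpl; [split; [apply open_full | exact I]|].
  destruct (HV k) as [HVk Vke].
  destruct (cube_root_spec _ (open_inter _ _ _ _ HW HVk) (conj We Vke)) as [HO [Oe _]].
  split; assumption.
Qed.

Lemma Wn_succ_cube (k : nat) : cube_root_of (fun x => Wn k x /\ V k x) (Wn (S k)).
Proof.
  apply cube_root_spec; destruct (Wn_open k), (HV k); [apply open_inter | split]; auto.
Qed.

Lemma Wn_inv (k : nat) (x : G) : Wn k x -> Wn k (inv x).
Proof. destruct k as [|k]; [auto | apply (Wn_succ_cube k)]. Qed.

Lemma Wn_succ (k : nat) (x : G) : Wn (S k) x -> Wn k x /\ V k x.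
Proof.
  intros Hx. rewrite <- (mulg1 x), <- (mulg1 e).
  apply (Wn_succ_cube k); [exact Hx | apply Wn_open..].
Qed.

Lemma Wn_succ_sub (k : nat) (x : G) : Wn (S k) x -> Wn k x.
Proof. intros Hx. apply (Wn_succ k x Hx). Qed.

Lemma Wn_succ_V (k : nat) (x : G) : Wn (S k) x -> V k x.
Proof. intros Hx. apply (Wn_succ k x Hx). Qed.

Lemma Wn_antitone (k m : nat) : (k <= m)%nat -> forall x, Wn m x -> Wn k x.
Proof. intros H. induction H; auto. intros x Hx. apply IHle, Wn_succ_sub, Hx. Qed.

Fixpoint chain_valid (x : G) (l : list (G * nat)) : Prop :=
  match l with
  | nil => True
  | (z, k) :: l' => Wn k (mul (inv x) z) /\ chain_valid z l'
  end.

Fixpoint chain_end (x : G) (l : list (G * nat)) : G :=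
  match l with nil => x | (z, _) :: l' => chain_end z l' end.

Fixpoint chain_cost (l : list (G * nat)) : R :=
  match l with nil => 0 | (_, k) :: l' => (/2)^k + chain_cost l' end.

Lemma chain_cost_nonneg (l : list (G * nat)) : 0 <= chain_cost l.
Proof.
  induction l as [|[z k] l IH]; simpl; [lra|]. pose proof (half_pow_pos k); lra.
Qed.

Lemma chain_valid_app x l1 l2 :
  chain_valid x (l1 ++ l2) <-> chain_valid x l1 /\ chain_valid (chain_end x l1) l2.
Proof. revert x; induction l1 as [|[z k] l IH]; intros x; simpl; [tauto | rewrite IH; tauto]. Qed.

Lemma chain_end_app x l1 l2 : chain_end x (l1 ++ l2) = chain_end (chain_end x l1) l2.
Proof. revert x; induction l1 as [|[z k] l IH]; intros x; simpl; auto. Qed.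

Lemma chain_cost_app l1 l2 : chain_cost (l1 ++ l2) = chain_cost l1 + chain_cost l2.
Proof. induction l1 as [|[z k] l IH]; simpl; [lra | rewrite IH; lra]. Qed.

Lemma chain_split (l : list (G * nat)) (t : R) : 0 <= t -> t < chain_cost l ->
  exists l1 z k l2, l = l1 ++ (z, k) :: l2 /\ chain_cost l1 <= t /\
    t < chain_cost l1 + (/2)^k.
Proof.
  revert t. induction l as [|[z k] l IH]; intros t Ht Hc; simpl in Hc; [lra|].
  destruct (Rlt_or_le t ((/2)^k)) as [h|h].
  - exists nil, z, k, l. simpl. split; [reflexivity | split; lra].
  - destruct (IH (t - (/2)^k)) as [l1 [z' [k' [l2 [-> [h1 h2]]]]]]; try lra.
    exists ((z, k) :: l1), z', k', l2. simpl. split; [reflexivity | split; lra].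
Qed.

(* Splitting the chain at the step carrying the midpoint of its cost leaves two halves of
   cost at most 2^-(m+2) and one step of level at least m + 1, so W_(m+1)^3 ⊆ W_m applies. *)
Lemma Wn_of_chain (l : list (G * nat)) (x : G) (m : nat) :
  chain_valid x l -> chain_cost l <= (/2)^(S m) -> Wn m (mul (inv x) (chain_end x l)).
Proof.
  remember (length l) as n eqn:Hn. assert (Hlen : (length l <= n)%nat) by lia. clear Hn.
  revert l x m Hlen. induction n as [|n IH]; intros l x m Hlen Hv Hc.
  { destruct l; [|simpl in Hlen; lia]. simpl. rewrite mulVg. apply Wn_open. }
  destruct (Req_dec (chain_cost l) 0) as [H0|H0].
  { destruct l as [|[z k] l]; [simpl; rewrite mulVg; apply Wn_open|].
    simpl in H0. pose proof (half_pow_pos k). pose proof (chain_cost_nonneg l). lra. }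
  pose proof (chain_cost_nonneg l) as Hpos.
  destruct (chain_split l (chain_cost l / 2)) as [l1 [z [k [l2 [-> [H1 H2]]]]]]; [lra | lra |].
  rewrite chain_cost_app in *. simpl in *.
  rewrite length_app in Hlen. simpl in Hlen.
  apply chain_valid_app in Hv. destruct Hv as [Hv1 [Hw Hv2]].
  rewrite chain_end_app. simpl. set (u := chain_end x l1). fold u in Hw, Hv2.
  pose proof (chain_cost_nonneg l1). pose proof (chain_cost_nonneg l2).
  rewrite <- (mul_telescope3 x u z). apply (Wn_succ_cube m).
  - apply (IH l1 x); [lia | exact Hv1 | simpl; lra].
  - apply (Wn_antitone (S m) k); [|exact Hw]. apply half_pow_le_inv. simpl; lra.
  - apply (IH l2 z); [lia | exact Hv2 | simpl; lra].
Qed.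

Lemma chain_reverse (l : list (G * nat)) (x : G) : chain_valid x l ->
  exists l', chain_valid (chain_end x l) l' /\ chain_end (chain_end x l) l' = x /\
    chain_cost l' = chain_cost l.
Proof.
  revert x. induction l as [|[z k] l IH]; intros x Hv; simpl.
  - exists nil. simpl. auto.
  - destruct Hv as [Hw Hv]. destruct (IH z Hv) as [l' [H1 [H2 H3]]].
    exists (l' ++ (x, k) :: nil).
    rewrite chain_valid_app, chain_end_app, chain_cost_app, H2. simpl.
    split; [split; [exact H1 | split; [|exact I]] | split; [reflexivity | lra]].
    replace (mul (inv z) x) with (inv (mul (inv x) z)) by (rewrite invM, invgK; reflexivity).
    apply Wn_inv, Hw.
Qed.

(* chain_dist x y, the infimum of the costs of chains from x to y, is computed as minus
   the supremum of this set of negated costs. *)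
Definition chain_costs (x y : G) : R -> Prop :=
  fun r => exists l, chain_valid x l /\ chain_end x l = y /\ r = - chain_cost l.

Lemma chain_costs_bound (x y : G) : bound (chain_costs x y).
Proof. exists 0. intros r [l [_ [_ ->]]]. pose proof (chain_cost_nonneg l); lra. Qed.

Lemma chain_costs_inhabited (x y : G) : exists r, chain_costs x y r.
Proof. exists (- chain_cost ((y, O) :: nil)), ((y, O) :: nil). simpl. auto. Qed.

Definition chain_dist (x y : G) : R :=
  - proj1_sig (completeness _ (chain_costs_bound x y) (chain_costs_inhabited x y)).

Lemma chain_dist_le (x y : G) (l : list (G * nat)) :
  chain_valid x l -> chain_end x l = y -> chain_dist x y <= chain_cost l.
Proof.
  intros Hv He. unfold chain_dist. destruct (completeness _ _ _) as [s Hs]. simpl.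
  assert (- chain_cost l <= s) by (apply (proj1 Hs); exists l; auto). lra.
Qed.

Lemma chain_dist_ge (x y : G) (c : R) :
  (forall l, chain_valid x l -> chain_end x l = y -> c <= chain_cost l) -> c <= chain_dist x y.
Proof.
  intros H. unfold chain_dist. destruct (completeness _ _ _) as [s Hs]. simpl.
  assert (s <= - c); [|lra].
  apply (proj2 Hs). intros r [l [Hv [He ->]]]. specialize (H l Hv He). lra.
Qed.

Lemma chain_dist_sym_le (x y : G) : chain_dist y x <= chain_dist x y.
Proof.
  apply chain_dist_ge. intros l Hv <-. destruct (chain_reverse l x Hv) as [l' [H1 [H2 <-]]].
  apply chain_dist_le; auto.
Qed.

Lemma chain_dist_triangle (x y z : G) : chain_dist x z <= chain_dist x y + chain_dist y z.
Proof.
  assert (H : forall l1, chain_valid x l1 -> chain_end x l1 = y ->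
            chain_dist x z - chain_cost l1 <= chain_dist y z).
  { intros l1 H1 H2. apply chain_dist_ge. intros l2 H3 H4.
    assert (chain_dist x z <= chain_cost (l1 ++ l2)).
    { apply chain_dist_le; [rewrite chain_valid_app, H2 | rewrite chain_end_app, H2]; auto. }
    rewrite chain_cost_app in *. lra. }
  assert (chain_dist x z - chain_dist y z <= chain_dist x y); [|lra].
  apply chain_dist_ge. intros l1 H1 H2. specialize (H l1 H1 H2). lra.
Qed.

Lemma Wn_of_chain_dist (x y : G) (m : nat) :
  chain_dist x y < (/2)^(S m) -> Wn m (mul (inv x) y).
Proof.
  intros H. apply NNPP. intros Hn.
  assert ((/2)^(S m) <= chain_dist x y); [|lra].
  apply chain_dist_ge. intros l Hv He.
  destruct (Rle_or_lt (chain_cost l) ((/2)^(S m))) as [h|h]; [|lra].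
  exfalso. apply Hn. rewrite <- He. apply Wn_of_chain; auto.
Qed.

Lemma chain_dist_of_Wn (x y : G) (m : nat) : Wn m (mul (inv x) y) -> chain_dist x y <= (/2)^m.
Proof.
  intros H. replace ((/2)^m) with (chain_cost ((y, m) :: nil)) by (simpl; lra).
  apply chain_dist_le; simpl; auto.
Qed.

Lemma chain_dist_metric : is_metric chain_dist.
Proof.
  split; [|split; [|split]].
  - intros x y. apply chain_dist_ge. intros l _ _. apply chain_cost_nonneg.
  - intros x y; split.
    + intros H. apply NNPP. intros Hxy.
      assert (Hne : mul (inv x) y <> e).
      { intros h. apply Hxy. rewrite <- (mulKVg x y), h, mulg1. reflexivity. }
      destruct (HT1 _ _ Hne) as [U [HU [Ue nU]]].
      destruct (HVbase U HU Ue) as [k Hk]. apply nU, Hk, Wn_succ_V, Wn_of_chain_dist.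
      rewrite H. apply half_pow_pos.
    + intros <-. apply Rle_antisym.
      * apply (chain_dist_le x x nil); simpl; auto.
      * apply chain_dist_ge. intros l _ _. apply chain_cost_nonneg.
  - intros x y. apply Rle_antisym; apply chain_dist_sym_le.
  - apply chain_dist_triangle.
Qed.

Lemma chain_dist_open (U : set G) : open T U <->
  (forall x, U x -> exists eps, 0 < eps /\ forall y, chain_dist x y < eps -> U y).
Proof.
  split.
  - intros HU x Ux.
    assert (Hxe : U (mul x e)) by (rewrite mulg1; exact Ux).
    destruct (HVbase _ (open_lmul x U HU) Hxe) as [k Hk].
    exists ((/2)^(S (S k))). split; [apply half_pow_pos|].
    intros y Hy. rewrite <- (mulKVg x y). apply Hk, Wn_succ_V, Wn_of_chain_dist, Hy.
  - intros H. apply open_of_local. intros x Ux. destruct (H x Ux) as [eps [He Hb]].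
    destruct (pow_lt_1_zero (/2) ltac:(rewrite Rabs_pos_eq; lra) eps He) as [m Hm].
    specialize (Hm m (le_n m)). rewrite Rabs_pos_eq in Hm by apply Rlt_le, half_pow_pos.
    exists (fun y => Wn m (mul (inv x) y)). split; [apply open_lmul, Wn_open|split].
    + rewrite mulVg. apply Wn_open.
    + intros y Hy. apply Hb. apply chain_dist_of_Wn in Hy. lra.
Qed.

End BirkhoffKakutani.

Theorem birkhoff_kakutani : T1 T -> countable_base_at T e -> metrizable T.
Proof.
  intros HT1 [V [HV HVbase]].
  exists (chain_dist V). split; [apply chain_dist_metric | apply chain_dist_open]; auto.
Qed.

End TopologicalGroup.

Theorem corollary2p3 (G : Type) (T : topology G) (mul : G -> G -> G)
  (inv : G -> G) (e : G) (HG : is_topological_group T mul inv e) :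
  metrizable T <-> (frechet_urysohn T /\ aleph_space T).
Proof.
  split.
  - intros [d [Hd Hop]]. split; [exact (metric_frechet_urysohn T d Hd Hop) |
                                 exact (metric_aleph T d Hd Hop)].
  - intros [HFU [Hreg [N [[Nn [HNn Hlf]] Hkn]]]].
    apply (birkhoff_kakutani T mul inv e HG (proj1 Hreg)).
    exact (countable_base_at_identity T mul inv e HG HFU Hreg N Nn HNn Hlf Hkn).
Qed.
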